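(* Let $R=K[X_1,\dots,X_d]$ be a polynomial ring over a field $K$ and let $\mathcal{F}_{ij}$ be a monomial ideal of $R$ for each $i=1,\dots,r$ and $j=1,\dots,s$. For $\mathbf{n}\in\mathbb{N}^r$ set $\mathcal{F}_j^{\mathbf{n}}=\mathcal{F}_{1j}^{n_1}\cdots\mathcal{F}_{rj}^{n_r}$. Then $\bigoplus_{\mathbf{n}\in\mathbb{N}^r}\left(\bigcap_{j=1}^s\mathcal{F}_j^{\mathbf{n}}\right)t_1^{n_1}\cdots t_r^{n_r}\subseteq R[t_1,\dots,t_r]$ is an $\mathbb{N}^r$-graded Noetherian $R$-algebra.
   Context: $t_1,\dots,t_r$ are indeterminates over $R$. *)

From HB Require Import structures.
From mathcomp Require Import all_boot all_order all_algebra.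
From mathcomp Require Import mpoly.
Set Implicit Arguments. Unset Strict Implicit. Unset Printing Implicit Defensive.
Import GRing.Theory.
Local Open Scope ring_scope.

Section Ideals.
Variable A : comRingType.

Definition is_ideal (I : A -> Prop) : Prop :=
  [/\ I 0, (forall x y, I x -> I y -> I (x + y)) & (forall a x, I x -> I (a * x))].

Definition ideal_span (S : A -> Prop) : A -> Prop :=
  fun f => exists l : seq (A * A),
    (forall p, p \in l -> S p.2) /\ f = \sum_(p <- l) p.1 * p.2.

Definition idealM (I J : A -> Prop) : A -> Prop :=
  ideal_span (fun f => exists a b, [/\ I a, J b & f = a * b]).

Definition idealX (I : A -> Prop) (n : nat) : A -> Prop :=
  iter n (idealM I) (fun _ => True).

Definition ideal_in (S I : A -> Prop) : Prop :=
  [/\ (forall x, I x -> S x), I 0, (forall x y, I x -> I y -> I (x + y))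
    & (forall a x, S a -> I x -> I (a * x))].

Definition noetherian_subring (S : A -> Prop) : Prop :=
  forall I : nat -> A -> Prop,
    (forall k, ideal_in S (I k)) ->
    (forall k x, I k x -> I k.+1 x) ->
    exists N, forall k, (N <= k)%N -> forall x, I k x -> I N x.

End Ideals.

Definition monomial_ideal (K : fieldType) (d : nat) (I : {mpoly K[d]} -> Prop) :=
  is_ideal I /\ forall f m, I f -> m \in msupp f -> I 'X_[m].

Definition idealXm (K : fieldType) (d r : nat) (F : 'I_r -> {mpoly K[d]} -> Prop)
  (n : 'X_{1..r}) : {mpoly K[d]} -> Prop :=
  foldr (fun i acc => idealM (idealX (F i) (n i)) acc) (fun _ => True) (enum 'I_r).

(* The multi-Rees algebra  (+)_n (cap_j F_j^n) t^n  inside R[t_1..t_r]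
   = {mpoly {mpoly K[d]}[r]} *)
Definition rees_inter (K : fieldType) (d r s : nat)
  (F : 'I_r -> 'I_s -> {mpoly K[d]} -> Prop) : {mpoly {mpoly K[d]}[r]} -> Prop :=
  fun P => forall (n : 'X_{1..r}) (j : 'I_s), idealXm (fun i => F i j) n (P@_n).

Definition R_subalgebra (R : comRingType) (r : nat) (S : {mpoly R[r]} -> Prop) :=
  [/\ forall c : R, S c%:MP,
      (forall P Q, S P -> S Q -> S (P - Q)) &
      (forall P Q, S P -> S Q -> S (P * Q))].

(* S is N^r-graded: it is the direct sum of its homogeneous components R t^n *)
Definition Nr_graded (R : comRingType) (r : nat) (S : {mpoly R[r]} -> Prop) :=
  forall P, S P -> forall n : 'X_{1..r}, S (P@_n *: 'X_[n]).

From HB Require Import structures.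
From mathcomp Require Import all_boot all_order all_algebra.
From mathcomp Require Import mpoly.
Local Open Scope ring_scope.

From mathcomp Require Import zify.
From Stdlib Require Import ClassicalEpsilon Classical.
Set Implicit Arguments. Unset Strict Implicit. Unset Printing Implicit Defensive.
Import Order.TTheory GRing.Theory.

(** Membership in the multi-Rees algebra S is tested coefficient by coefficient
    in t, and the F_ij are monomial ideals, so everything reduces to monomials.
    By Dickson's lemma each F_ij has a finite set G_ij of minimal monomial
    generators, and X^a lies in F_1j^n_1 ... F_rj^n_r iff a dominates a sum of
    n_1 exponents from G_1j, ..., n_r exponents from G_rj. This makes S a
    subring, and it attaches to each monomial t^n X^a of S finitely many
    natural-number coordinates: n, a, the multiplicities of the generators and
    the slack of a over their sum. When all coordinates of one such monomial
    dominate those of another, the quotient monomial is again in S.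

    Noetherianity is proved with leading terms for the lexicographic order on
    (exponent of t, exponent of X in the leading coefficient). Along an
    ascending chain of ideals of S, once the sets of leading pairs stop growing,
    division by leading terms shows that the ideals stop growing. Otherwise we
    could pick infinitely many leading pairs, each new at its stage of the
    chain; Dickson's lemma on their coordinates gives two of them whose
    quotient monomial lies in S, so the later one was not new after all. *)

Lemma exists_tail_argmin (h : nat -> nat) m :
  exists i, (m <= i)%N /\ forall j, (m <= j)%N -> (h i <= h j)%N.
Proof.
suff tail_min v i0 : (m <= i0)%N -> (h i0 <= v)%N ->
    exists i, (m <= i)%N /\ forall j, (m <= j)%N -> (h i <= h j)%N.
  exact: (tail_min (h m) m).
elim: v i0 => [|v IHv] i0 le_m_i0 le_h_v.
  by exists i0; split=> // j _; move: le_h_v; rewrite leqn0 => /eqP ->.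
have [[j [le_m_j lt_h]]|no_lower] :=
  classic (exists j, (m <= j)%N /\ (h j < h i0)%N).
  by apply: (IHv j) => //; rewrite -ltnS (leq_trans lt_h).
exists i0; split=> // j le_m_j; rewrite leqNgt; apply/negP => lt_h.
by apply: no_lower; exists j.
Qed.

Lemma exists_nondecreasing_subseq (h : nat -> nat) : exists psi : nat -> nat,
  {homo psi : p q / (p < q)%N} /\ {homo h \o psi : p q / (p <= q)%N}.
Proof.
have [pick pickP] := ClassicalEpsilon.choice _ (exists_tail_argmin h).
pose psi := fix psi p := if p is p'.+1 then pick (psi p').+1 else pick 0%N.
have psiS p : (psi p < psi p.+1)%N by case: (pickP (psi p).+1).
have hpsiS p : (h (psi p) <= h (psi p.+1))%N.
  have [m le_m_psi ->] : exists2 m, (m <= psi p)%N & psi p = pick m.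
    by case: p => [|p]; [exists 0%N | exists (psi p).+1].
  by case: (pickP m) => _; apply; rewrite (leq_trans le_m_psi) // ltnW.
exists psi; split; first exact: homo_ltn ltn_trans psiS.
exact: homo_leq leq_trans hpsiS.
Qed.

Lemma exists_common_nondecreasing_subseq (T : eqType) (h : T -> nat -> nat)
    (l : seq T) :
  exists phi : nat -> nat, {homo phi : p q / (p < q)%N} /\
    forall t, t \in l -> {homo h t \o phi : p q / (p <= q)%N}.
Proof.
elim: l => [|t0 l [phi [phi_incr phi_mono]]]; first by exists id; split.
have [psi [psi_incr psi_mono]] := exists_nondecreasing_subseq (h t0 \o phi).
exists (phi \o psi); split=> [p q lt_pq|t]; first exact/phi_incr/psi_incr.
rewrite inE => /orP[/eqP -> //|t_l p q].
rewrite leq_eqVlt => /orP[/eqP -> //|/psi_incr/ltnW].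
exact: phi_mono.
Qed.

Lemma dickson (T : finType) (h : T -> nat -> nat) :
  exists p q, (p < q)%N /\ forall t, (h t p <= h t q)%N.
Proof.
have [phi [phi_incr phi_mono]] := exists_common_nondecreasing_subseq h (enum T).
exists (phi 0%N), (phi 1%N); split=> [|t]; first exact: phi_incr.
by apply: (phi_mono t); rewrite ?mem_enum.
Qed.

Lemma exists_lepm_pair (d : nat) (b : nat -> 'X_{1..d}) :
  exists p q, (p < q)%N /\ (b p <= b q)%MM.
Proof.
have [p [q [lt_pq le_b]]] := dickson (fun (k : 'I_d) p => b p k).
by exists p, q; split=> //; apply/mnm_lepP.
Qed.

Lemma mnm_finite_basis (d : nat) (E : 'X_{1..d} -> Prop) :
  exists G : seq 'X_{1..d}, (forall g, g \in G -> E g) /\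
    (forall b, E b -> exists2 g, g \in G & (g <= b)%MM).
Proof.
apply: NNPP => no_basis.
have escape (G : seq 'X_{1..d}) : exists b, (forall g, g \in G -> E g) ->
    E b /\ forall g, g \in G -> ~~ (g <= b)%MM.
  apply: NNPP => stuck.
  have G_E g : g \in G -> E g.
    by move=> g_G; apply: NNPP => nEg; apply: stuck; exists 0%MM => /(_ g g_G).
  apply: no_basis; exists G; split=> // b Eb; apply: NNPP => none_below.
  apply: stuck; exists b => _; split=> // g g_G; apply/negP => le_gb.
  by apply: none_below; exists g.
have [nxt nxtP] := ClassicalEpsilon.choice _ escape.
pose L := fix L p := if p is p'.+1 then rcons (L p') (nxt (L p')) else [::].
have L_E p g : g \in L p -> E g.
  elim: p g => [|p IHp] g //=; rewrite mem_rcons inE => /orP[/eqP ->|/IHp //].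
  by case: (nxtP _ IHp).
have nxt_L k p : (k < p)%N -> nxt (L k) \in L p.
  elim: p => [|p IHp] //; rewrite ltnS leq_eqVlt mem_rcons inE.
  by case/orP=> [/eqP ->|/IHp ->]; rewrite ?eqxx ?orbT.
have [p [q [lt_pq le_nxt]]] := exists_lepm_pair (fun p => nxt (L p)).
by case: (nxtP _ (L_E q)) => _ /(_ _ (nxt_L _ _ lt_pq)); rewrite le_nxt.
Qed.

Section IdealSpan.
Variable A : comNzRingType.
Implicit Types (S : A -> Prop) (x y : A).

Lemma ideal_span0 S : ideal_span S 0.
Proof. by exists [::]; rewrite big_nil. Qed.

Lemma ideal_spanD S x y : ideal_span S x -> ideal_span S y -> ideal_span S (x + y).
Proof.
move=> [lx [lx_S ->]] [ly [ly_S ->]]; exists (lx ++ ly); rewrite big_cat.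
by split=> // p; rewrite mem_cat => /orP[/lx_S|/ly_S].
Qed.

Lemma ideal_spanMl S a x : ideal_span S x -> ideal_span S (a * x).
Proof.
move=> [l [l_S ->]]; exists [seq (a * p.1, p.2) | p <- l]; split.
  by move=> q /mapP[p p_l ->]; apply: (l_S p).
by rewrite big_map mulr_sumr; apply: eq_bigr => p _; rewrite mulrA.
Qed.

Lemma ideal_span_gen S x : S x -> ideal_span S x.
Proof.
move=> Sx; exists [:: (1, x)]; rewrite big_seq1 mul1r.
by split=> // p; rewrite inE => /eqP ->.
Qed.

End IdealSpan.

Lemma lep0m (k : nat) (a : 'X_{1..k}) : (0 <= a)%MM.
Proof. by apply/mnm_lepP => i; rewrite mnm0E. Qed.

Lemma lepm_add (k : nat) (m1 m2 n1 n2 : 'X_{1..k}) :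
  (m1 <= n1)%MM -> (m2 <= n2)%MM -> (m1 + m2 <= n1 + n2)%MM.
Proof.
move=> /mnm_lepP le1 /mnm_lepP le2; apply/mnm_lepP => i.
by rewrite !mnmDE leq_add.
Qed.

Section MonomialPowers.
Variables (K : comNzRingType) (d : nat).
Local Notation R := {mpoly K[d]}.
Local Notation M := 'X_{1..d}.

Lemma msuppM_sum (x y : R) m : m \in msupp (x * y) ->
  exists m1 m2, [/\ m1 \in msupp x, m2 \in msupp y & m = (m1 + m2)%MM].
Proof. by move/msuppM_le/allpairsP => [[m1 m2] /= [? ? ->]]; exists m1, m2. Qed.

Lemma msupp_ideal_span (S : R -> Prop) (P : M -> Prop) :
    (forall m m', P m -> P (m' + m)%MM) ->
    (forall f m, S f -> m \in msupp f -> P m) ->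
  forall f m, ideal_span S f -> m \in msupp f -> P m.
Proof.
move=> P_up S_P f m [l [l_S ->]]; elim: l l_S m => [|p l IHl] l_S m.
  by rewrite big_nil msupp0.
rewrite big_cons => /msuppD_le; rewrite mem_cat => /orP[|]; last first.
  by apply: IHl => q q_l; apply: l_S; rewrite inE q_l orbT.
move=> /msuppM_sum[m1 [m2 [_ m2_p ->]]]; apply: P_up.
by apply: S_P m2_p; apply: l_S; rewrite mem_head.
Qed.

Definition mnm_comb (g : seq M) (c : nat -> nat) : M :=
  (\big[+%MM/0%MM]_(t < size g) (nth 0%MM g t *+ c t))%MM.

Lemma mnm_combE g c k :
  mnm_comb g c k = (\sum_(t < size g) nth 0%MM g t k * c t)%N.
Proof. by rewrite mnm_sumE; apply: eq_bigr => t _; rewrite mulmnE. Qed.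

Definition above_comb (g : seq M) (k : nat) (a : M) :=
  exists2 c : nat -> nat, (\sum_(t < size g) c t)%N = k & (mnm_comb g c <= a)%MM.

Lemma above_comb_le g k a a' :
  (a <= a')%MM -> above_comb g k a -> above_comb g k a'.
Proof. by move=> le_a [c sum_c le_ca]; exists c => //; apply: lepm_trans le_a. Qed.

Lemma above_combD1 g k b a :
  b \in g -> above_comb g k a -> above_comb g k.+1 (b + a)%MM.
Proof.
move=> b_g [c sum_c le_ca]; set i0 := index b g.
have lt_i0 : (i0 < size g)%N by rewrite index_mem.
have sum_delta (e : nat -> nat) :
    (\sum_(t < size g) e t * (t == i0 :> nat))%N = e i0.
  rewrite (bigD1 (Ordinal lt_i0)) //= eqxx muln1 big1 ?addn0 // => t ne_t.
  by have /negbTE -> : (t : nat) != i0 by []; rewrite muln0.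
exists (fun t => c t + (t == i0))%N.
  rewrite big_split /= sum_c -addn1; congr (_ + _)%N.
  by rewrite -[RHS](sum_delta (fun=> 1%N)); under [RHS]eq_bigr do rewrite mul1n.
apply/mnm_lepP => i; rewrite mnm_combE mnmDE.
under eq_bigr do rewrite mulnDr.
rewrite big_split /= (sum_delta (fun t => nth 0%MM g t i)) nth_index //.
by rewrite addnC -mnm_combE leq_add2l; apply: (mnm_lepP le_ca).
Qed.

Lemma idealX_msupp_above (F : R -> Prop) g :
    (forall f m, F f -> m \in msupp f -> exists2 b, b \in g & (b <= m)%MM) ->
  forall k f m, idealX F k f -> m \in msupp f -> above_comb g k m.
Proof.
move=> F_g; elim=> [|k IHk] f m.
  move=> _ _; exists (fun=> 0%N); first by rewrite big1.
  by apply/mnm_lepP => i; rewrite mnm_combE big1 // => t _; rewrite muln0.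
rewrite /idealX iterS -/(idealX F k); apply: msupp_ideal_span.
  by move=> m0 m' /(above_comb_le (lem_addl m' m0)).
move=> _ _ [a [b [Fa Fb ->]]] /msuppM_sum[m1 [m2 [m1_a m2_b ->]]].
have [b0 b0_g le_b0] := F_g _ _ Fa m1_a.
apply: (above_comb_le _ (above_combD1 b0_g (IHk _ _ Fb m2_b))).
exact: lepm_add le_b0 (lepm_refl m2).
Qed.

Lemma idealX_XD (F : R -> Prop) k b a :
  F 'X_[b] -> idealX F k 'X_[a] -> idealX F k.+1 'X_[b + a].
Proof.
move=> Fb Fa; rewrite /idealX iterS -/(idealX F k) mpolyXD.
by apply: ideal_span_gen; exists 'X_[b], 'X_[a].
Qed.

Lemma idealX_X_comb (F : R -> Prop) g (c : nat -> nat) :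
  (forall b, b \in g -> F 'X_[b]) ->
  idealX F (\sum_(t < size g) c t)%N 'X_[mnm_comb g c].
Proof.
move=> g_F; rewrite /mnm_comb.
suff prefix L : (L <= size g)%N -> idealX F (\sum_(t < L) c t)%N
    'X_[\big[+%MM/0%MM]_(t < L) (nth 0%MM g t *+ c t)%MM].
  exact: prefix.
elim: L => [|L IHL] lt_L; first by rewrite !big_ord0.
rewrite !big_ord_recr /= addmC addnC.
have F_gL : F 'X_[nth 0%MM g L] by apply: g_F; rewrite mem_nth.
elim: (c L) => [|e IHe]; first by rewrite mulm0n add0m; apply/IHL/ltnW.
by rewrite mulmS -addmA addSn; apply: idealX_XD.
Qed.

End MonomialPowers.

Section MonomialProducts.
Variables (K : comNzRingType) (d r : nat).
Local Notation R := {mpoly K[d]}.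
Local Notation M := 'X_{1..d}.
Variables (F : 'I_r -> R -> Prop) (G : 'I_r -> seq M).
Hypothesis G_F : forall i b, b \in G i -> F i 'X_[b].
Hypothesis F_G : forall i f m, F i f -> m \in msupp f ->
  exists2 b, b \in G i & (b <= m)%MM.
Implicit Types (l : seq 'I_r) (n : 'X_{1..r}) (a : M) (c : 'I_r -> nat -> nat).

Definition idealX_prod l n : R -> Prop :=
  foldr (fun i acc => idealM (idealX (F i) (n i)) acc) (fun _ => True) l.

Lemma idealX_prod0 l n : idealX_prod l n 0.
Proof. by case: l => [|i l] //=; apply: ideal_span0. Qed.

Lemma idealX_prodD l n x y :
  idealX_prod l n x -> idealX_prod l n y -> idealX_prod l n (x + y).
Proof. by case: l => [|i l] //=; apply: ideal_spanD. Qed.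

Lemma idealX_prodMl l n z x : idealX_prod l n x -> idealX_prod l n (z * x).
Proof. by case: l => [|i l] //=; apply: ideal_spanMl. Qed.

Lemma idealX_prodB l n x y :
  idealX_prod l n x -> idealX_prod l n y -> idealX_prod l n (x - y).
Proof.
by move=> Ix Iy; rewrite -mulN1r; apply: idealX_prodD => //; apply: idealX_prodMl.
Qed.

Definition mnm_combs l c : M :=
  (\big[+%MM/0%MM]_(i <- l) mnm_comb (G i) (c i))%MM.

Definition comb_witness l n a c :=
  (forall i, i \in l -> (\sum_(t < size (G i)) c i t)%N = n i) /\
  (mnm_combs l c <= a)%MM.

Definition above_combs l n a := exists c, comb_witness l n a c.

Lemma above_combs_le l n a a' :
  (a <= a')%MM -> above_combs l n a -> above_combs l n a'.
Proof.
by move=> le_a [c [sum_c le_ca]]; exists c; split=> //; apply: lepm_trans le_a.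
Qed.

Lemma idealX_prod_msupp_above l n f m :
  uniq l -> idealX_prod l n f -> m \in msupp f -> above_combs l n m.
Proof.
elim: l f m => [|i l IHl] /= f m.
  move=> _ _ _; exists (fun _ _ => 0%N); split=> //.
  by rewrite /mnm_combs big_nil lep0m.
move=> /andP[i_l uniq_l]; apply: msupp_ideal_span => [m0 m'|].
  exact/above_combs_le/lem_addl.
move=> _ _ [x [y [Fx Fy ->]]] /msuppM_sum[m1 [m2 [m1_x m2_y ->]]].
have [ci sum_ci le_ci] := idealX_msupp_above (@F_G i) Fx m1_x.
have [c [sum_c le_c]] := IHl _ _ uniq_l Fy m2_y.
exists (fun i' => if i' == i then ci else c i'); split.
  move=> i'; rewrite inE; case: eqP => [-> _ //|_ /= ]; exact: sum_c.
rewrite /mnm_combs big_cons eqxx; apply: lepm_add => //.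
rewrite (eq_big_seq (fun i' => mnm_comb (G i') (c i'))) // => i' i'_l.
by case: eqP => // eq_i'; move: i_l; rewrite -eq_i' i'_l.
Qed.

Lemma idealX_prod_X_combs l n c :
    (forall i, i \in l -> (\sum_(t < size (G i)) c i t)%N = n i) ->
  idealX_prod l n 'X_[mnm_combs l c].
Proof.
elim: l => [|i l IHl] //= sum_c; rewrite /mnm_combs big_cons mpolyXD.
apply: ideal_span_gen; do 2 eexists; split; last reflexivity.
  by rewrite -(sum_c i (mem_head _ _)); apply: idealX_X_comb => b; apply: G_F.
by apply: IHl => i' i'_l; apply: sum_c; rewrite inE i'_l orbT.
Qed.

Lemma idealX_prod_X_above l n a : above_combs l n a -> idealX_prod l n 'X_[a].
Proof.
move=> [c [sum_c le_ca]]; rewrite -(submK le_ca) mpolyXD.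
exact/idealX_prodMl/idealX_prod_X_combs.
Qed.

Lemma idealX_prodP l n f : uniq l ->
  idealX_prod l n f <-> (forall m, m \in msupp f -> above_combs l n m).
Proof.
move=> uniq_l; split=> [If m|above_f]; first exact: idealX_prod_msupp_above.
rewrite (mpolyE f) big_seq; apply: big_ind => [||m m_f].
- exact: idealX_prod0.
- exact: idealX_prodD.
- by rewrite -mul_mpolyC; apply/idealX_prodMl/idealX_prod_X_above/above_f.
Qed.

Lemma mnm_combsD l c c' :
  mnm_combs l (fun i t => c i t + c' i t)%N = (mnm_combs l c + mnm_combs l c')%MM.
Proof.
apply/mnmP => k; rewrite mnmDE !mnm_sumE -big_split /=; apply: eq_bigr => i _.
by rewrite !mnm_combE -big_split /=; apply: eq_bigr => t _; rewrite mulnDr.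
Qed.

Lemma above_combsD l n1 n2 a1 a2 :
  above_combs l n1 a1 -> above_combs l n2 a2 ->
  above_combs l (n1 + n2)%MM (a1 + a2)%MM.
Proof.
move=> [c [sum_c le_c]] [c' [sum_c' le_c']].
exists (fun i t => c i t + c' i t)%N; split; last by rewrite mnm_combsD lepm_add.
by move=> i i_l; rewrite big_split /= sum_c // sum_c' // mnmDE.
Qed.

Lemma above_combs0 l a : above_combs l 0%MM a.
Proof.
exists (fun _ _ => 0%N); split=> [i _|]; first by rewrite big1 // mnm0E.
apply: lepm_trans (lep0m a); apply/mnm_lepP => k.
rewrite mnm_sumE mnm0E big1 // => i _.
by rewrite mnm_combE big1 // => t _; rewrite muln0.
Qed.

Lemma comb_witnessB l n n' a a' c c' :
    comb_witness l n a c -> comb_witness l n' a' c' ->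
    (forall i t, (t < size (G i))%N -> (c i t <= c' i t)%N) ->
    (forall k, a k - mnm_combs l c k <= a' k - mnm_combs l c' k)%N ->
  comb_witness l (n' - n) (a' - a) (fun i t => c' i t - c i t)%N.
Proof.
move=> [sum_c le_c] [sum_c' le_c'] le_cc' le_slack; split=> [i i_l|].
  by rewrite mnmBE -sum_c // -sum_c' // sumnB // => t _; apply: le_cc'.
apply/mnm_lepP => k; rewrite mnmBE.
have combsB : (mnm_combs l (fun i t => c' i t - c i t) k + mnm_combs l c k)%N =
    mnm_combs l c' k.
  rewrite -mnmDE -mnm_combsD !mnm_sumE; apply: eq_bigr => i _.
  by rewrite !mnm_combE; apply: eq_bigr => t _; rewrite subnK // le_cc'.
have := mnm_lepP le_c k; have := mnm_lepP le_c' k; have := le_slack k.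
lia.
Qed.

End MonomialProducts.

Section LeadingMonomial.
Variables (R : comNzRingType) (k : nat).
Implicit Types (p : {mpoly R[k]}) (m : 'X_{1..k}).

Lemma mpolyX_neq0 m : 'X_[m] != 0 :> {mpoly R[k]}.
Proof. by apply/eqP => X0; move: (msuppX R m); rewrite X0 msupp0. Qed.

Lemma mlead_le_of_vanishing p m :
  (forall b, (m < b)%O -> p@_b = 0) -> (mlead p <= m)%O.
Proof.
move=> vanish; have [->|nz_p] := eqVneq p 0; first by rewrite mlead0 le0x.
by rewrite leNgt; apply/negP => /vanish; apply/eqP; rewrite mleadc_eq0.
Qed.

Lemma mlead_lt_of_vanishing p m : p != 0 ->
  (forall b, (m < b)%O -> p@_b = 0) -> p@_m = 0 -> (mlead p < m)%O.
Proof.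
move=> nz_p vanish pm0; rewrite lt_neqAle mlead_le_of_vanishing // andbT.
by apply: contraNneq nz_p => eq_m; rewrite -mleadc_eq0 eq_m pm0.
Qed.

End LeadingMonomial.

Section LeadingPairs.
Variables (K : fieldType) (d r : nat).
Local Notation R := {mpoly K[d]}.
Local Notation A := {mpoly R[r]}.
Local Notation M := 'X_{1..d}.
Local Notation N := 'X_{1..r}.
Implicit Types (f g : A) (n : N) (a : M).

Definition bimonom n a : A := 'X_[a] *: 'X_[n].

Definition lead_pair f : N * M := (mlead f, mlead (mleadc f)).

Definition lead_pair_lt (x y : N * M) :=
  (x.1 < y.1)%O || ((x.1 == y.1) && (x.2 < y.2)%O).

Lemma lead_pair_lt_wf : well_founded lead_pair_lt.
Proof.
move=> [x1 x2]; elim/(@ltmwf r): x1 x2 => x1 IH1 x2.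
elim/(@ltmwf d): x2 => x2 IH2; constructor => -[y1 y2] /orP[lt1|/andP[/eqP /= -> lt2]].
  exact: IH1.
exact: IH2.
Qed.

Lemma lead_pair_cancel f g : f != 0 -> g != 0 -> lead_pair f = lead_pair g ->
  exists c : K, let h := f - c%:MP *: g in
    h = 0 \/ lead_pair_lt (lead_pair h) (lead_pair f).
Proof.
move=> nz_f nz_g [eq_n eq_a].
exists (mleadc (mleadc f) / mleadc (mleadc g)); set c := _ / _; set h := _ - _.
have hE m : h@_m = f@_m - c%:MP * g@_m by rewrite mcoeffB mcoeffZ.
have [->|nz_h] := eqVneq h 0; [by left | right].
have g_top : forall b, (mlead f < b)%O -> g@_b = 0.
  by move=> b; rewrite eq_n => /mcoeff_gt_mlead.
have : (mlead h <= mlead f)%O.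
  apply: mlead_le_of_vanishing => b lt_b.
  by rewrite hE g_top // mcoeff_gt_mlead ?mulr0 ?subr0.
rewrite /lead_pair_lt /= le_eqVlt => /orP[/eqP eq_h|->//]; rewrite eq_h eqxx ltxx /=.
have nz_cg : mleadc (mleadc g) != 0 by rewrite !mleadc_eq0.
have g_lead : g@_(mlead f) = mleadc g by rewrite eq_n.
have g_lead2 : (mleadc g)@_(mlead (mleadc f)) = mleadc (mleadc g) by rewrite eq_a.
apply: mlead_lt_of_vanishing => [|b lt_b|]; first by rewrite -eq_h mleadc_eq0.
  rewrite hE mcoeffB mcoeffCM (mcoeff_gt_mlead lt_b) g_lead.
  by rewrite mcoeff_gt_mlead ?mulr0 ?subr0 // -eq_a.
by rewrite hE mcoeffB mcoeffCM g_lead g_lead2 /c divfK // subrr.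
Qed.

Lemma bimonom_neq0 n a : bimonom n a != 0.
Proof.
apply/eqP => /(congr1 (mcoeff n)); rewrite mcoeffZ mcoeffX eqxx mulr1 mcoeff0.
exact/eqP/mpolyX_neq0.
Qed.

Lemma lead_pair_bimonomM n a g : g != 0 ->
  bimonom n a * g != 0 /\
  lead_pair (bimonom n a * g) = ((n + (lead_pair g).1)%MM, (a + (lead_pair g).2)%MM).
Proof.
move=> nz_g; have nz_X : 'X_[a] != 0 :> R by apply: mpolyX_neq0.
have lead_mon : mlead (bimonom n a) = n by rewrite mleadZ // mleadXm.
split; first by rewrite mulf_neq0 ?bimonom_neq0.
rewrite /lead_pair mleadM ?bimonom_neq0 // lead_mon; congr (_, _).
rewrite -[in (n + _)%MM]lead_mon mleadcM lead_mon mcoeffZ mcoeffX eqxx mulr1 /=.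
by rewrite mleadM ?mleadXm // mleadc_eq0.
Qed.

End LeadingPairs.
Arguments bimonom {K d r}.

Lemma ascending_chain_le (A : Type) (I : nat -> A -> Prop) :
    (forall k x, I k x -> I k.+1 x) ->
  forall k k', (k <= k')%N -> forall x, I k x -> I k' x.
Proof.
move=> I_incr k k' le_k; rewrite -(subnKC le_k).
by elim: (k' - k)%N => [|e IHe] x; rewrite ?addn0 ?addnS // => /IHe /I_incr.
Qed.

Section NoetherianCriterion.
Variables (K : fieldType) (d r : nat).
Local Notation R := {mpoly K[d]}.
Local Notation A := {mpoly R[r]}.
Local Notation M := 'X_{1..d}.
Local Notation N := 'X_{1..r}.
Variable S : A -> Prop.
Hypothesis S_const : forall c : K, S c%:MP%:MP.

Definition lead_set (I : A -> Prop) (z : N * M) :=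
  exists g, [/\ I g, g != 0 & lead_pair g = z].

Lemma lead_set_bimonomM I n a z : ideal_in S I -> S (bimonom n a) ->
  lead_set I z -> lead_set I ((n + z.1)%MM, (a + z.2)%MM).
Proof.
move=> [_ _ _ I_mul] S_mon [g [Ig nz_g <-]].
have [nz_mg lead_mg] := lead_pair_bimonomM n a nz_g.
by exists (bimonom n a * g); split=> //; apply: I_mul.
Qed.

Lemma ideal_sub_of_lead_set (I J : A -> Prop) : ideal_in S I -> ideal_in S J ->
    (forall x, J x -> I x) -> (forall z, lead_set I z -> lead_set J z) ->
  forall x, I x -> J x.
Proof.
move=> [_ I0 ID IM] [_ J0 JD JM] J_I lead_IJ.
suff lead_ind z f : I f -> f != 0 -> lead_pair f = z -> J f.
  by move=> f If; have [->|nz_f] := eqVneq f 0; last exact: lead_ind If nz_f erefl.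
elim/(well_founded_induction (@lead_pair_lt_wf d r)): z f => z IHz f If nz_f lead_f.
have [g [Jg nz_g lead_g]] := lead_IJ z (ex_intro _ f (And3 If nz_f lead_f)).
have [c] := lead_pair_cancel nz_f nz_g (etrans lead_f (esym lead_g)).
have cg_J : J (c%:MP *: g) by rewrite -mul_mpolyC; apply: JM Jg.
have h_I : I (f - c%:MP *: g).
  rewrite -scaleNr -mul_mpolyC -rmorphN; apply: ID If _.
  by apply: IM; [apply: S_const | apply: J_I].
move=> /= [/eqP|lt_h]; first by rewrite subr_eq0 => /eqP ->.
rewrite -(subrK (c%:MP *: g) f); apply: JD cg_J.
have [->//|nz_h] := eqVneq (f - c%:MP *: g) 0.
by apply: (IHz _ _ _ h_I nz_h erefl); rewrite -lead_f.
Qed.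

Hypothesis S_lead_wqo : forall x : nat -> N * M, (forall p, lead_set S (x p)) ->
  exists p q, [/\ (p < q)%N, ((x p).1 <= (x q).1)%MM, ((x p).2 <= (x q).2)%MM &
    S (bimonom ((x q).1 - (x p).1) ((x q).2 - (x p).2))].

Lemma lead_set_chain_stationary (I : nat -> A -> Prop) :
    (forall k, ideal_in S (I k)) -> (forall k x, I k x -> I k.+1 x) ->
  exists k0, forall k, (k0 <= k)%N -> forall z, lead_set (I k) z -> lead_set (I k0) z.
Proof.
move=> I_ideal I_incr; apply: NNPP => unstable.
have escape k0 : exists kz : nat * (N * M),
    [/\ (k0 <= kz.1)%N, lead_set (I kz.1) kz.2 & ~ lead_set (I k0) kz.2].
  apply: NNPP => stuck; apply: unstable; exists k0 => k le_k z Lz.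
  by apply: NNPP => nLz; apply: stuck; exists (k, z).
have [nxt nxtP] := ClassicalEpsilon.choice _ escape.
pose ks := fix ks p := if p is p'.+1 then (nxt (ks p')).1 else 0%N.
pose x p := (nxt (ks p)).2.
have ks_incr : {homo ks : p q / (p <= q)%N}.
  by apply: homo_leq leq_trans _ => p; case: (nxtP (ks p)).
have x_new p : lead_set (I (ks p.+1)) (x p) /\ ~ lead_set (I (ks p)) (x p).
  by case: (nxtP (ks p)).
have lead_incr k k' z : (k <= k')%N -> lead_set (I k) z -> lead_set (I k') z.
  move=> le_k [g [Ig nz_g lead_g]]; exists g; split=> //.
  exact: ascending_chain_le le_k _ Ig.
have x_S p : lead_set S (x p).
  have [[g [Ig nz_g lead_g]] _] := x_new p; exists g; split=> //.
  by case: (I_ideal (ks p.+1)) => I_S _ _ _; apply: I_S.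
have [p [q [lt_pq le_n le_a S_mon]]] := S_lead_wqo x_S.
apply: (proj2 (x_new q)).
have x_p_old : lead_set (I (ks q)) (x p).
  exact: lead_incr (ks_incr _ _ lt_pq) (proj1 (x_new p)).
have := lead_set_bimonomM (I_ideal _) S_mon x_p_old.
by rewrite !submK //; case: (x q).
Qed.

Lemma noetherian_of_lead_wqo : noetherian_subring S.
Proof.
move=> I I_ideal I_incr.
have [k0 lead_stable] := lead_set_chain_stationary I_ideal I_incr.
exists k0 => k le_k; apply: ideal_sub_of_lead_set => //; last exact: lead_stable.
exact: ascending_chain_le le_k.
Qed.

End NoetherianCriterion.

Section MultiReesAlgebra.
Variables (K : fieldType) (d r s : nat).
Local Notation R := {mpoly K[d]}.
Local Notation A := {mpoly R[r]}.
Local Notation M := 'X_{1..d}.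
Local Notation N := 'X_{1..r}.
Variables (F : 'I_r -> 'I_s -> R -> Prop) (G : 'I_r -> 'I_s -> seq M).
Hypothesis G_F : forall i j b, b \in G i j -> F i j 'X_[b].
Hypothesis F_G : forall i j f m, F i j f -> m \in msupp f ->
  exists2 b, b \in G i j & (b <= m)%MM.
Local Notation S := (rees_inter F).
Local Notation comb_witness j := (comb_witness (G^~ j) (enum 'I_r)).
Local Notation above j := (above_combs (G^~ j) (enum 'I_r)).

Lemma idealXmP j n f :
  idealXm (F^~ j) n f <-> forall m, m \in msupp f -> above j n m.
Proof. exact: (idealX_prodP (G_F^~ j) (F_G^~ j) _ _ (enum_uniq _)). Qed.

Lemma idealXm_mul j n1 n2 x y : idealXm (F^~ j) n1 x -> idealXm (F^~ j) n2 y ->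
  idealXm (F^~ j) (n1 + n2)%MM (x * y).
Proof.
move=> /idealXmP above_x /idealXmP above_y; apply/idealXmP => m.
by move=> /msuppM_sum[m1 [m2 [m1_x m2_y ->]]]; apply: above_combsD; auto.
Qed.

Lemma idealXm0 j f : idealXm (F^~ j) 0%MM f.
Proof. by apply/idealXmP => m _; apply: above_combs0. Qed.

Lemma rees_scaleX n c : (forall j, idealXm (F^~ j) n c) -> S (c *: 'X_[n]).
Proof.
move=> c_F m j; rewrite mcoeffZ mcoeffX; case: eqP => [<-|_]; first by rewrite mulr1.
by rewrite mulr0; apply: idealX_prod0.
Qed.

Lemma rees_const c : S c%:MP.
Proof. by rewrite -alg_mpolyC -mpolyX0; apply: rees_scaleX => j; apply: idealXm0. Qed.

Lemma rees_sub P Q : S P -> S Q -> S (P - Q).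
Proof. by move=> SP SQ n j; rewrite mcoeffB; exact: (idealX_prodB (SP n j) (SQ n j)). Qed.

Lemma rees_mul P Q : S P -> S Q -> S (P * Q).
Proof.
move=> SP SQ n j; rewrite mcoeffM; apply: big_ind => [||k /eqP sum_k].
- exact: idealX_prod0.
- exact: idealX_prodD.
- by have := idealXm_mul (SP k.1 j) (SQ k.2 j); rewrite -sum_k.
Qed.

Lemma rees_homog P : S P -> forall n, S (P@_n *: 'X_[n]).
Proof. by move=> SP n; apply: rees_scaleX. Qed.

Lemma rees_lead_above j g :
  S g -> g != 0 -> above j (lead_pair g).1 (lead_pair g).2.
Proof.
move=> Sg nz_g; have /idealXmP := Sg (mlead g) j; apply.
by rewrite mlead_supp ?mleadc_eq0.
Qed.

Lemma rees_lead_wqo (x : nat -> N * M) : (forall p, lead_set S (x p)) ->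
  exists p q, [/\ (p < q)%N, ((x p).1 <= (x q).1)%MM, ((x p).2 <= (x q).2)%MM &
    S (bimonom ((x q).1 - (x p).1) ((x q).2 - (x p).2))].
Proof.
move=> x_lead.
have witness (pj : nat * 'I_s) : exists c, comb_witness pj.2 (x pj.1).1 (x pj.1).2 c.
  by have [g [Sg nz_g <-]] := x_lead pj.1; apply: rees_lead_above.
have [C CP] := ClassicalEpsilon.choice _ witness.
pose B := (\max_(ij : 'I_r * 'I_s) size (G ij.1 ij.2))%N.
pose slack p j k := ((x p).2 k - mnm_combs (G^~ j) (enum 'I_r) (C (p, j)) k)%N.
(* The multiplicity index t < size (G i j) is padded to the common bound B. *)
pose h (u : 'I_r + 'I_d + ('I_s * 'I_r * 'I_B) + ('I_s * 'I_d)) p :=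
  match u with
  | inl (inl (inl i)) => (x p).1 i
  | inl (inl (inr k)) => (x p).2 k
  | inl (inr (j, i, t)) => C (p, j) i t
  | inr (j, k) => slack p j k
  end.
have [p [q [lt_pq le_h]]] := dickson h.
have le_n : ((x p).1 <= (x q).1)%MM.
  by apply/mnm_lepP => i; apply: (le_h (inl (inl (inl i)))).
have le_a : ((x p).2 <= (x q).2)%MM.
  by apply/mnm_lepP => k; apply: (le_h (inl (inl (inr k)))).
exists p, q; split=> //; apply: rees_scaleX => j.
apply: (idealX_prod_X_above (G_F^~ j)).
exists (fun i t => C (q, j) i t - C (p, j) i t)%N.
apply: comb_witnessB (CP (p, j)) (CP (q, j)) _ (fun k => le_h (inr (j, k))).
move=> i t lt_t; have lt_tB : (t < B)%N.
  apply: leq_trans lt_t _.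
  exact: (leq_bigmax (F := fun ij : 'I_r * 'I_s => size (G ij.1 ij.2)) (i, j)).
exact: (le_h (inl (inr (j, i, Ordinal lt_tB)))).
Qed.

End MultiReesAlgebra.

Unset Implicit Arguments.

Theorem proposition6p1 (K : fieldType) (d r s : nat)
  (F : 'I_r -> 'I_s -> {mpoly K[d]} -> Prop)
  (hF : forall i j, monomial_ideal (F i j)) :
  [/\ R_subalgebra (rees_inter F), Nr_graded (rees_inter F)
    & noetherian_subring (rees_inter F)].
Proof.
have [Gs Gs_basis] := ClassicalEpsilon.choice _
  (fun ij : 'I_r * 'I_s => mnm_finite_basis (fun b => F ij.1 ij.2 'X_[b])).
pose G i j := Gs (i, j).
have G_F i j b : b \in G i j -> F i j 'X_[b].
  by case: (Gs_basis (i, j)) => G_F _; apply: G_F.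
have F_G i j f m : F i j f -> m \in msupp f -> exists2 b, b \in G i j & (b <= m)%MM.
  move=> Ff m_f; case: (Gs_basis (i, j)) => _; apply.
  by case: (hF i j) => _ F_X; apply: F_X m_f.
split; first split.
- exact: rees_const G_F F_G.
- exact: rees_sub.
- exact: rees_mul G_F F_G.
- exact: rees_homog.
- apply: noetherian_of_lead_wqo => [c|x x_lead].
    exact: rees_const G_F F_G c%:MP.
  exact: (rees_lead_wqo G_F F_G x_lead).
Qed.
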